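(* Suppose an $N\times N$ Hadamard matrix exists for some positive integer $N$. Then for every integer $k\ge 0$ and every positive integer $M\le 2^kN$, there exists an equal norm tight integer frame (ENTIF) with $2^kN$ elements in $\mathcal{H}_M$.
   Context: An $N\times N$ Hadamard matrix is a matrix $H$ with all entries in $\{1,-1\}$ satisfying $H^TH=N I_N$. $\mathcal{H}_M$ is the real $M$-dimensional Hilbert space, identified with $\mathbb{R}^M$ via a fixed orthonormal basis. An ENTIF with $N$ elements in $\mathcal{H}_M$ is a family of $N$ vectors with integer coordinates that forms a frame for $\mathbb{R}^M$ which is tight and equal norm; equivalently, an $M\times N$ integer matrix $A$ of rank $M$ with $AA^T=\lambda I_M$ for some $\lambda>0$ and all columns of the same Euclidean norm. *)

From mathcomp Require Import all_boot all_order all_algebra.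
Set Implicit Arguments. Unset Strict Implicit. Unset Printing Implicit Defensive.
Import Order.TTheory GRing.Theory Num.Theory.
Local Open Scope ring_scope.

Definition is_hadamard (N : nat) (H : 'M[int]_N) : Prop :=
  (forall i j, H i j = 1 \/ H i j = -1) /\ H^T *m H = (N%:R : int)%:M.

Definition col_sqnorm (M K : nat) (A : 'M[int]_(M, K)) (j : 'I_K) : int :=
  \sum_(i < M) A i j ^+ 2.

(* An ENTIF with K elements in H_M (identified with R^M): an M x K integer
   matrix whose columns are the frame vectors, of rank M (computed over Q,
   equivalently over R), with A A^T = lambda I_M for some lambda > 0 and all
   columns of the same Euclidean norm. *)
Definition is_ENTIF (M K : nat) (A : 'M[int]_(M, K)) : Prop :=
  \rank (map_mx (fun z : int => z%:~R : rat) A) = M /\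
  (exists lambda : int, 0 < lambda /\ A *m A^T = lambda%:M) /\
  (forall j k : 'I_K, col_sqnorm A j = col_sqnorm A k).

From mathcomp Require Import all_boot all_order all_algebra.
Local Open Scope ring_scope.
Import GRing.Theory Num.Theory.

(* Sylvester's doubling H |-> [[H, H], [H, -H]] turns a Hadamard matrix of
   order N into one of order K = 2^k N.  The columns of such an H are pairwise
   orthogonal sign vectors, so truncating every column to its first M
   coordinates gives an M x K integer matrix A with A A^T = K I_M (its rows are
   M distinct rows of H^T) whose columns all have squared norm M. *)

Lemma hadamard_block_mx (n : nat) (H : 'M[int]_n) :
  is_hadamard H -> is_hadamard (block_mx H H H (- H)).
Proof.
case=> Hsign HtH; split.
  move=> i j; rewrite -[i]splitK -[j]splitK.
  case: (split i) => a; case: (split j) => b;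
    rewrite ?block_mxEul ?block_mxEur ?block_mxEdl ?block_mxEdr ?mxE //;
    by case: (Hsign a b) => ->; auto.
have trN : (- H)^T = - H^T by apply/matrixP=> a b; rewrite !mxE.
rewrite tr_block_mx mulmx_block trN !mulmxN !mulNmx opprK HtH.
rewrite (scalar_mx_block n n); congr block_mx.
all: by apply/matrixP=> a b; rewrite !mxE ?natrD ?mulrnDl ?subrr.
Qed.

Lemma hadamard_exp2_mul (N : nat) :
  (exists H : 'M[int]_N, is_hadamard H) ->
  forall k, exists H : 'M[int]_(2 ^ k * N), is_hadamard H.
Proof.
move=> hadN; elim=> [|k [H hadH]]; first by rewrite expn0 mul1n.
have -> : (2 ^ k.+1 * N = 2 ^ k * N + 2 ^ k * N)%N.
  by rewrite expnS -mulnA mul2n -addnn.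
by exists (block_mx H H H (- H)); apply: hadamard_block_mx.
Qed.

Lemma rowsub_mul_tr_scalar (R : pzRingType) (m n p : nat) (f : 'I_p -> 'I_m)
    (B : 'M[R]_(m, n)) (a : R) :
  injective f -> B *m B^T = a%:M -> rowsub f B *m (rowsub f B)^T = a%:M.
Proof.
move=> inj_f BBt; apply/matrixP=> i i'.
have := congr1 (fun X : 'M[R]_m => X (f i) (f i')) BBt.
rewrite /= !mxE (inj_eq inj_f) => <-.
by apply: eq_bigr => j _; rewrite !mxE.
Qed.

Lemma row_free_mul_tr_scalar (F : fieldType) (m n : nat) (B : 'M[F]_(m, n))
    (a : F) :
  a != 0 -> B *m B^T = a%:M -> row_free B.
Proof.
move=> a_neq0 BBt; rewrite /row_free eqn_leq rank_leq_row /=.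
apply: (@mulmx1_min_rank _ _ _ _ B 1%:M (B^T *m a^-1%:M)).
by rewrite mul1mx mulmxA BBt mul_scalar_mx scale_scalar_mx mulfV.
Qed.

Lemma col_sqnorm_sign_mx (M K : nat) (A : 'M[int]_(M, K)) (j : 'I_K) :
  (forall i j, A i j = 1 \/ A i j = -1) -> col_sqnorm A j = M%:R.
Proof.
move=> Asign; rewrite /col_sqnorm (eq_bigr (fun _ => 1)) ?sumr_const ?card_ord //.
by move=> i _; case: (Asign i j) => ->.
Qed.

Theorem theorem3p5 (N : nat) :
  (0 < N)%N ->
  (exists H : 'M[int]_N, is_hadamard H) ->
  forall (k M : nat), (0 < M)%N -> (M <= 2 ^ k * N)%N ->
    exists A : 'M[int]_(M, 2 ^ k * N), is_ENTIF A.
Proof.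
move=> N_gt0 hadN k M _ leMK.
have [H [Hsign HtH]] := hadamard_exp2_mul _ hadN k.
set K := (2 ^ k * N)%N in H Hsign HtH leMK *.
have K_gt0 : (0 < K)%N by rewrite muln_gt0 expn_gt0.
pose A := rowsub (widen_ord leMK) H^T.
have AAt : A *m A^T = (K%:R : int)%:M.
  apply: rowsub_mul_tr_scalar; last by rewrite trmxK.
  by move=> i i' /(congr1 val) /= /val_inj.
exists A; split; [|split].
- apply/eqP/(@row_free_mul_tr_scalar _ _ _ _ (K%:R)).
    by rewrite pnatr_eq0 -lt0n.
  by rewrite map_trmx -map_mxM AAt map_scalar_mx rmorph_nat.
- by exists K%:R; rewrite ltr0n.
- move=> j j'; rewrite !col_sqnorm_sign_mx // => i i'; rewrite !mxE; exact: Hsign.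
Qed.
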